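(* Let $F$ be a field and let $f=\sum_{\sigma\in S_d}\lambda_\sigma x_{\sigma(1)}\cdots x_{\sigma(d)}\in F\langle X\rangle$ be a multilinear polynomial of degree $d\ge 2$ with $\sum_{\sigma\in S_d}\lambda_\sigma\neq 0$. Let $\mathcal A$ be a unital $F$-algebra and let $\phi:\mathcal A\to\mathcal A$ be a linear map that preserves zeros of $f$ and satisfies $\phi(1)\in F^*\cdot 1$. If $a,b\in\mathcal A$ satisfy $ab=ba=0$, then $\phi(a)\phi(b)+\phi(b)\phi(a)=0$.
   Context: $F\langle X\rangle$ is the free algebra over $F$ in noncommuting indeterminates $x_1,x_2,\ldots$. A map $\phi$ on an $F$-algebra $\mathcal A$ preserves zeros of $f$ if for all $a_1,\ldots,a_d\in\mathcal A$, $f(a_1,\ldots,a_d)=0$ implies $f(\phi(a_1),\ldots,\phi(a_d))=0$. *)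

From HB Require Import structures.
From mathcomp Require Import all_boot all_order all_algebra all_fingroup.
Set Implicit Arguments. Unset Strict Implicit. Unset Printing Implicit Defensive.
Import GRing.Theory.
Local Open Scope ring_scope.

Definition mlin_eval (F : fieldType) (A : algType F) (d : nat)
    (lam : {perm 'I_d} -> F) (a : 'I_d -> A) : A :=
  \sum_(s : {perm 'I_d}) lam s *: \prod_(i < d) a (s i).

Definition preserves_zeros (F : fieldType) (A : algType F) (d : nat)
    (lam : {perm 'I_d} -> F) (phi : A -> A) : Prop :=
  forall a : 'I_d -> A, mlin_eval lam a = 0 -> mlin_eval lam (fun i => phi (a i)) = 0.

From HB Require Import structures.
From mathcomp Require Import all_boot all_order all_algebra all_fingroup.
Import GRing.Theory.
Local Open Scope ring_scope.
Set Implicit Arguments. Unset Strict Implicit.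

(* Fix two distinct indices i0, i1 and consider the "pair
   function" [x, y | c] sending i0 to x, i1 to y and every other index to the
   central scalar c%:A.  For each permutation s, the monomial
   \prod_i [x, y | c] (s i) collapses to c^(d-2) times x*y or y*x, and which of
   the two occurs depends only on s (on whether s lists i0 before i1), not on
   x, y, c.  Consequently
   - if x*y = y*x = 0, then f vanishes at [x, y | c];
   - f([x, y | c]) + f([y, x | c]) = c^(d-2) (\sum_s lam s) (x*y + y*x).
   For the theorem, f vanishes at [a, b | 1] and [b, a | 1]; zero preservation
   and phi 1 = c%:A show f vanishes at [phi a, phi b | c] and
   [phi b, phi a | c], and the second identity (with the nonzero factor
   c^(d-2) \sum_s lam s) yields phi a * phi b + phi b * phi a = 0. *)

Section PairFunctions.
Variables (F : fieldType) (A : algType F).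

Lemma prod_scalar_outside_pair (T : eqType) (i0 i1 : T) (g : T -> A) (c : F)
    (r : seq T) :
  (forall k, k != i0 -> k != i1 -> g k = c%:A) ->
  \prod_(k <- r) g k =
  c ^+ count (fun k => (k != i0) && (k != i1)) r *:
    \prod_(k <- [seq k <- r | (k == i0) || (k == i1)]) g k.
Proof.
move=> g_scalar; elim: r => [|k r IHr]; first by rewrite !big_nil expr0 scale1r.
rewrite big_cons /= IHr; case: (boolP ((k == i0) || (k == i1))) => [k_in|].
  by rewrite big_cons -scalerAr; move: k_in; case: (k == i0); case: (k == i1).
rewrite negb_or => /andP [k_i0 k_i1]; rewrite k_i0 k_i1 /= g_scalar //.
by rewrite mulr_algl scalerA exprS.
Qed.

Lemma uniq_list_of_pair (T : eqType) (i0 i1 : T) (r : seq T) :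
  i0 != i1 -> uniq r -> all (fun k => (k == i0) || (k == i1)) r ->
  i0 \in r -> i1 \in r -> r = [:: i0; i1] \/ r = [:: i1; i0].
Proof.
move=> i01; case: r => [|u [|v [|w r]]] //=.
- by rewrite !inE => _ _ /eqP <- /eqP E; rewrite E eqxx in i01.
- rewrite !inE !andbT => u_v /andP [u_in v_in] _ _.
  by move: i01 u_v; case/orP: u_in => /eqP->; case/orP: v_in => /eqP->;
     rewrite ?eqxx //; auto.
- move=> /and3P [u_vw v_w _] /and4P [u_in v_in w_in _] _ _; exfalso.
  move: i01 u_vw v_w; rewrite !inE !negb_or.
  by case/orP: u_in => /eqP->; case/orP: v_in => /eqP->; case/orP: w_in => /eqP->;
     rewrite ?eqxx ?andbF ?andbT.
Qed.

Variables (d : nat) (i0 i1 : 'I_d).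
Hypothesis i01 : i0 != i1.

Definition pair_fun (x y : A) (c : F) (k : 'I_d) : A :=
  if k == i0 then x else if k == i1 then y else c%:A.

Definition lists_i0_first (s : {perm 'I_d}) : bool :=
  [seq k <- [seq s i | i <- index_enum 'I_d] | (k == i0) || (k == i1)]
    == [:: i0; i1].

Lemma prod_pair_fun (s : {perm 'I_d}) (x y : A) (c : F) :
  \prod_(i < d) pair_fun x y c (s i) =
  c ^+ (d - 2) *: (if lists_i0_first s then x * y else y * x).
Proof.
rewrite /lists_i0_first -(big_map s predT).
set S := [seq s i | i <- _]; set L := [seq k <- S | _].
have uniqS : uniq S by rewrite map_inj_uniq ?index_enum_uniq //; apply: perm_inj.
have inS k : k \in S by rewrite -[k](permKV s) map_f ?mem_index_enum.
have sizeS : size S = d.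
  by rewrite size_map [index_enum _]unlock -enumT size_enum_ord.
have L_pair : L = [:: i0; i1] \/ L = [:: i1; i0].
  apply: uniq_list_of_pair; rewrite ?filter_uniq ?mem_filter ?eqxx ?orbT ?inS //.
  by apply/allP => k; rewrite mem_filter => /andP [].
have countS : count (fun k => (k != i0) && (k != i1)) S = (d - 2)%N.
  rewrite -(eq_count (a1 := predC (fun k => (k == i0) || (k == i1)))); last first.
    by move=> k; rewrite /= negb_or.
  have := count_predC (fun k => (k == i0) || (k == i1)) S.
  rewrite sizeS -size_filter -/L.
  by case: L_pair => -> E; rewrite -[X in (X - 2)%N]E addKn.
rewrite (@prod_scalar_outside_pair _ i0 i1 _ c S) => [|k k_i0 k_i1]; last first.
  by rewrite /pair_fun (negbTE k_i0) (negbTE k_i1).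
rewrite -/L countS; have i10 : (i1 == i0) = false by rewrite eq_sym (negbTE i01).
case: L_pair => ->; rewrite !big_cons big_nil mulr1 /pair_fun eqxx ?i10 ?eqxx //.
by rewrite eqseq_cons i10.
Qed.

Variable lam : {perm 'I_d} -> F.

Lemma mlin_eval_pair_fun_eq0 (x y : A) (c : F) :
  x * y = 0 -> y * x = 0 -> mlin_eval lam (pair_fun x y c) = 0.
Proof.
move=> xy0 yx0; rewrite /mlin_eval big1 // => s _.
by rewrite prod_pair_fun; case: lists_i0_first; rewrite ?xy0 ?yx0 !scaler0.
Qed.

(* Swapping the two entries turns every monomial x*y into y*x and back, so the
   two evaluations add up to a multiple of the Jordan product x*y + y*x. *)
Lemma mlin_eval_pair_fun_swap (x y : A) (c : F) :
  mlin_eval lam (pair_fun x y c) + mlin_eval lam (pair_fun y x c) =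
  (c ^+ (d - 2) * \sum_(s : {perm 'I_d}) lam s) *: (x * y + y * x).
Proof.
rewrite /mlin_eval -big_split mulr_sumr scaler_suml; apply: eq_bigr => s _.
rewrite /= !prod_pair_fun !scalerA -scalerDr mulrC.
by case: lists_i0_first; rewrite // addrC.
Qed.

End PairFunctions.

Lemma eq_mlin_eval (F : fieldType) (A : algType F) (d : nat)
    (lam : {perm 'I_d} -> F) (a a' : 'I_d -> A) :
  a =1 a' -> mlin_eval lam a = mlin_eval lam a'.
Proof.
by move=> eq_a; apply: eq_bigr => s _; congr (_ *: _); apply: eq_bigr => i _.
Qed.

Theorem lemma3p1 (F : fieldType) (A : algType F) (d : nat)
    (lam : {perm 'I_d} -> F) (phi : {linear A -> A}) :
  (2 <= d)%N ->
  \sum_(s : {perm 'I_d}) lam s != 0 ->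
  preserves_zeros lam phi ->
  (exists c : F, c != 0 /\ phi 1 = c%:A) ->
  forall a b : A, a * b = 0 -> b * a = 0 ->
  phi a * phi b + phi b * phi a = 0.
Proof.
move=> d_ge2 sum_neq0 phi_pz [c [c_neq0 phi1]] a b ab0 ba0.
pose i0 : 'I_d := Ordinal (ltnW d_ge2); pose i1 : 'I_d := Ordinal d_ge2.
have i01 : i0 != i1 by [].
have phi_pair x y :
    (fun k => phi (pair_fun i0 i1 x y 1 k)) =1 pair_fun i0 i1 (phi x) (phi y) c.
  move=> k; rewrite /pair_fun; do 2!case: ifP => // _.
  by rewrite linearZ /= phi1 scale1r.
have f_ab0 := phi_pz _ (mlin_eval_pair_fun_eq0 i01 lam 1 ab0 ba0).
have f_ba0 := phi_pz _ (mlin_eval_pair_fun_eq0 i01 lam 1 ba0 ab0).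
rewrite (eq_mlin_eval _ (phi_pair _ _)) in f_ab0.
rewrite (eq_mlin_eval _ (phi_pair _ _)) in f_ba0.
have /eqP := mlin_eval_pair_fun_swap i01 lam (phi a) (phi b) c.
rewrite f_ab0 f_ba0 addr0 eq_sym scaler_eq0 mulf_eq0 expf_eq0.
by rewrite (negbTE c_neq0) (negbTE sum_neq0) andbF => /eqP.
Qed.
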